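(* Let $\mathcal D$ be a distribution over $\mathcal X\times\{0,1\}$ with $\Pr_{(x,y)\sim\mathcal D}[y=0]\in[1/2-b_1,1/2+b_1]$ for some $b_1>0$. Let $\mathcal D_{\mathrm{shift}}$ be a distribution over $\mathcal X\times\{0,1\}$ whose class-conditional distributions equal those of $\mathcal D$, i.e., $\mathcal D_{\mathrm{shift}}(\cdot\mid Y=y)=\mathcal D(\cdot\mid Y=y)$ for all $y\in\{0,1\}$, and with $\Pr_{(x,y)\sim\mathcal D_{\mathrm{shift}}}[y=0]\in[1/2+b_2,1/2+b_3]$ for $b_1<b_2<b_3<1/2$. Let $h:\mathcal X\to\{0,1\}$ satisfy $\ell_{\mathcal D_{\mathrm{shift}}}(h):=\Pr_{(x,y)\sim\mathcal D_{\mathrm{shift}}}[h(x)\ne y]\le\Pr_{(x,y)\sim\mathcal D_{\mathrm{shift}}}[y=1]/2$. Then $\ell_{\mathcal D}(h):=\Pr_{(x,y)\sim\mathcal D}[h(x)\ne y]\le1/4+b_1/2$. *)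

From HB Require Import structures.
From mathcomp Require Import all_boot all_order all_algebra.
From mathcomp Require Import all_classical all_reals all_analysis.
Set Implicit Arguments. Unset Strict Implicit. Unset Printing Implicit Defensive.
Import Order.TTheory GRing.Theory Num.Theory.
Local Open Scope classical_set_scope.
Local Open Scope ring_scope.

Definition Pr {d} {T : measurableType d} {R : realType}
  (P : probability T R) (A : set T) : R := fine (P A).

Definition label_prob {d} {X : measurableType d} {R : realType}
  (P : probability (X * bool)%type R) (b : bool) : R :=
  Pr P [set xy | xy.2 = b].

Definition class_cond {d} {X : measurableType d} {R : realType}
  (P : probability (X * bool)%type R) (b : bool) (A : set X) : R :=
  Pr P [set xy | xy.1 \in A /\ xy.2 = b] / label_prob P b.

Definition loss01 {d} {X : measurableType d} {R : realType}
  (P : probability (X * bool)%type R) (h : X -> bool) : R :=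
  Pr P [set xy | h xy.1 != xy.2].

(* Write p, q for the probabilities of the label 0 under D and under the
   shifted distribution, and e_y for the error rate of h on class y, which the
   shift leaves unchanged.  The two losses are then p e_0 + (1 - p) e_1 and
   q e_0 + (1 - q) e_1.  Since p <= q, moving weight from class 0 back to
   class 1 turns the bound q e_0 + (1 - q) e_1 <= (1 - q)/2 into
   p e_0 + (1 - p) e_1 <= (1 - p)/2, and (1 - p)/2 <= 1/4 + b_1/2. *)

From HB Require Import structures.
From mathcomp Require Import all_boot all_order all_algebra.
From mathcomp Require Import all_classical all_reals all_analysis.
From mathcomp Require Import lra.
Set Implicit Arguments.
Unset Strict Implicit.
Unset Printing Implicit Defensive.
Import Order.TTheory GRing.Theory Num.Theory.
Local Open Scope classical_set_scope.
Local Open Scope ring_scope.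

Lemma reweighted_error_le (R : realFieldType) (p q e0 e1 : R) :
  p <= q -> q < 1 -> 0 <= e0 ->
  q * e0 + (1 - q) * e1 <= (1 - q) / 2 ->
  p * e0 + (1 - p) * e1 <= (1 - p) / 2.
Proof.
move=> le_pq lt_q1 e0_ge0 shifted_le.
have scaled : (1 - p) * (q * e0 + (1 - q) * e1) <= (1 - p) * ((1 - q) / 2).
  by rewrite ler_wpM2l // subr_ge0 ltW // (le_lt_trans le_pq).
have gap : 0 <= (q - p) * e0 by rewrite mulr_ge0 // subr_ge0.
nra.
Qed.

Section Probability.
Variables (d : measure_display) (T : measurableType d) (R : realType).
Variable P : probability T R.

Lemma Pr_ge0 (A : set T) : 0 <= Pr P A.
Proof. by rewrite fine_ge0. Qed.

Lemma Pr_le (A B : set T) : measurable A -> measurable B -> A `<=` B ->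
  Pr P A <= Pr P B.
Proof.
move=> mA mB AB; rewrite /Pr fine_le ?fin_num_measure //.
by apply: le_measure; rewrite ?inE.
Qed.

Lemma Pr_setC (A : set T) : measurable A -> Pr P (~` A) = 1 - Pr P A.
Proof.
move=> mA; rewrite /Pr probability_setC //.
by rewrite -[P A]fineK ?fin_num_measure // -EFinB.
Qed.

Lemma Pr_setU (A B : set T) : measurable A -> measurable B ->
  A `&` B = set0 -> Pr P (A `|` B) = Pr P A + Pr P B.
Proof.
by move=> mA mB AB0; rewrite /Pr measureU // fineD ?fin_num_measure.
Qed.

End Probability.

Section LabelledData.
Variables (d : measure_display) (X : measurableType d) (R : realType).
Variable P : probability (X * bool)%type R.

Definition labelled (A : set X) (b : bool) : set (X * bool) :=
  [set xy | xy.1 \in A /\ xy.2 = b].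

Lemma labelledE (A : set X) (b : bool) : labelled A b = A `*` [set b].
Proof.
by apply/seteqP; split => -[x y]; rewrite /labelled /setX /= in_setE.
Qed.

Lemma measurable_labelled (A : set X) (b : bool) :
  measurable A -> measurable (labelled A b).
Proof. by move=> mA; rewrite labelledE; apply: measurableX. Qed.

Lemma label_setE (b : bool) : [set xy | xy.2 = b] = labelled setT b.
Proof.
by apply/seteqP; split => -[x y]; rewrite /labelled /= in_setT //; case.
Qed.

Lemma label_prob_true : label_prob P true = 1 - label_prob P false.
Proof.
rewrite /label_prob -Pr_setC; last first.
  by rewrite label_setE; apply: measurable_labelled.
by congr Pr; apply/seteqP; split => -[x y] /=; case: y.
Qed.

(* Also holds when label_prob P b = 0: then both sides vanish, the right-hand
   one because x / 0 = 0. *)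
Lemma Pr_labelled (A : set X) (b : bool) : measurable A ->
  Pr P (labelled A b) = label_prob P b * class_cond P b A.
Proof.
move=> mA; rewrite /class_cond mulrC.
have [pb0|pb_neq0] := eqVneq (label_prob P b) 0; last by rewrite divfK.
apply/eqP; rewrite pb0 mulr0 eq_le Pr_ge0 andbT -pb0 /label_prob label_setE.
apply: Pr_le (measurable_labelled _ mA) (measurable_labelled _ measurableT) _.
by move=> -[x y] [_ /= ->]; rewrite /labelled /= in_setT.
Qed.

Lemma measurable_misclassified (h : X -> bool) (b : bool) :
  measurable_fun setT h -> measurable [set x | h x != b].
Proof.
move=> mh; rewrite -[X in measurable X]setTI.
exact: (mh measurableT [set c | c != b]).
Qed.

Definition class_error (h : X -> bool) (b : bool) : R :=
  class_cond P b [set x | h x != b].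

Lemma class_error_ge0 (h : X -> bool) (b : bool) : 0 <= class_error h b.
Proof. by rewrite divr_ge0 // Pr_ge0. Qed.

Lemma loss01_class_error (h : X -> bool) : measurable_fun setT h ->
  loss01 P h = label_prob P false * class_error h false
             + (1 - label_prob P false) * class_error h true.
Proof.
move=> mh; have m_err b := measurable_misclassified b mh.
rewrite -label_prob_true -!Pr_labelled // -Pr_setU;
  [|exact: measurable_labelled..|].
- congr Pr; apply/seteqP; split => -[x y]; rewrite /labelled /= !in_setE /=.
  + by case: y => ?; [right | left].
  + by case=> -[+ ->].
- by rewrite -subset0 => -[x y] [[_ /= ->] [_]].
Qed.

End LabelledData.

Theorem lemma10p8 (d : measure_display) (X : measurableType d) (R : realType)
  (D Dshift : probability (X * bool)%type R) (b1 b2 b3 : R) (h : X -> bool) :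
  0 < b1 -> b1 < b2 -> b2 < b3 -> b3 < 1/2 ->
  1/2 - b1 <= label_prob D false <= 1/2 + b1 ->
  (forall (y : bool) (A : set X), measurable A ->
     class_cond Dshift y A = class_cond D y A) ->
  1/2 + b2 <= label_prob Dshift false <= 1/2 + b3 ->
  measurable_fun setT h ->
  loss01 Dshift h <= label_prob Dshift true / 2 ->
  loss01 D h <= 1/4 + b1/2.
Proof.
move=> _ lt_b12 lt_b23 lt_b3 /andP[ge_pD le_pD] same_class_cond
  /andP[ge_qS le_qS] mh shift_loss.
have le_pq : label_prob D false <= label_prob Dshift false by lra.
have lt_q1 : label_prob Dshift false < 1 by lra.
have same_error y : class_error Dshift h y = class_error D h y.
  exact/same_class_cond/measurable_misclassified.
move: shift_loss; rewrite !loss01_class_error // label_prob_true !same_error.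
move=> /(reweighted_error_le le_pq lt_q1 (class_error_ge0 _ _ _)).
move=> /le_trans; apply; lra.
Qed.
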